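(* Let $\mathcal{F}$ be a set of connected graphs with $P_{2}\in\mathcal{F}$, and let $G$ be a finite simple graph. If $b_{\mathcal{F}}(G-X)\leq |X|$ for all $X\subseteq V(G)$, then $G$ has an $\mathcal{F}$-factor.
   Context: A graph $H$ is hypomatchable if $H-u$ has a perfect matching for every $u\in V(H)$ (in particular $K_1$ is hypomatchable). For a set $\mathcal{F}$ of connected graphs, an $\mathcal{F}$-factor of a graph is a spanning subgraph each of whose components is isomorphic to a member of $\mathcal{F}$. For a graph $H$, $b_{\mathcal{F}}(H)$ denotes the number of connected components of $H$ that are hypomatchable and have no $\mathcal{F}$-factor. $P_2$ is the path on two vertices. *)

From Stdlib Require Import ClassicalEpsilon.
From HB Require Import structures.
From mathcomp Require Import all_boot.

Set Implicit Arguments. Unset Strict Implicit. Unset Printing Implicit Defensive.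

Definition asbool (P : Prop) : bool :=
  if excluded_middle_informative P then true else false.

Record sgraph := FGraph {
  fg_V : finType;
  fg_E : rel fg_V;
  fg_sym : symmetric fg_E;
  fg_irr : irreflexive fg_E }.

Definition connected_sgraph (H : sgraph) : Prop :=
  0 < #|fg_V H| /\ forall x y : fg_V H, connect (@fg_E H) x y.

Definition fg_iso (H1 H2 : sgraph) : Prop :=
  exists g : fg_V H1 -> fg_V H2,
    bijective g /\ forall a b, fg_E (g a) (g b) = fg_E a b.

Lemma P2_sym : symmetric (fun x y : bool => x != y).
Proof. by move=> x y; rewrite eq_sym. Qed.
Lemma P2_irr : irreflexive (fun x y : bool => x != y).
Proof. by move=> x; rewrite eqxx. Qed.
Definition P2 : sgraph := FGraph P2_sym P2_irr.

Definition iso_on (V : finType) (f : rel V) (C : {set V}) (H : sgraph) : Prop :=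
  exists g : fg_V H -> V,
    [/\ injective g,
        (forall v, v \in C <-> exists a, g a = v) &
        forall a b, f (g a) (g b) = fg_E a b].

Definition has_Ffactor (F : sgraph -> Prop) (V : finType) (e : rel V)
    (S : {set V}) : Prop :=
  exists f : rel V,
    [/\ symmetric f,
        (forall x y, f x y -> [&& x \in S, y \in S & e x y]) &
        forall x, x \in S ->
          exists H, F H /\ iso_on f [set y | connect f x y] H].

Definition induced (V : finType) (e : rel V) (S : {set V}) : rel V :=
  fun x y => [&& x \in S, y \in S & e x y].

Definition has_perfect_matching (V : finType) (e : rel V) (S : {set V}) : Prop :=
  exists M : {set {set V}},
    (forall A, A \in M -> exists x y,
        [/\ x \in S, y \in S, e x y & A = [set x; y]]) /\
    (forall x, x \in S -> exists! A, A \in M /\ x \in A).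

Definition hypomatchable (V : finType) (e : rel V) (C : {set V}) : Prop :=
  forall u, u \in C -> has_perfect_matching e (C :\ u).

Definition is_component (V : finType) (e : rel V) (S C : {set V}) : Prop :=
  exists2 x, x \in S & C = [set y | connect (induced e S) x y].

Definition bF (F : sgraph -> Prop) (V : finType) (e : rel V) (S : {set V}) : nat :=
  #|[set C : {set V} | asbool (is_component e S C /\ hypomatchable e C
                                /\ ~ has_Ffactor F e C)]|.

(* Choose X maximising h(G - X) - |X|, where h counts hypomatchable components, and among
   the maximisers one of largest size.  By induction, every component of G - X that is not
   hypomatchable has an F-factor; when that component is all of G, the induction hypothesis
   for the family {P2} instead shows that G would be hypomatchable.  The maximality of X
   together with b_F(G - Y) <= |Y| is exactly Hall's condition for matching the hypomatchable
   components into X plus h(G - X) - |X| dummy vertices, where only components which already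
   have an F-factor may take a dummy.  A component C matched to x in X makes C + x perfectly
   matchable, hence P2-factorable, and all these pieces glue to an F-factor of G. *)

From Stdlib Require Import ClassicalEpsilon.
From mathcomp Require Import all_boot zify.

Set Implicit Arguments. Unset Strict Implicit. Unset Printing Implicit Defensive.

Lemma asboolE (P : Prop) : asbool P = true <-> P.
Proof. by rewrite /asbool; case: excluded_middle_informative. Qed.

Lemma imset_card_onto (T1 T2 : finType) (f : T1 -> T2) (A : {set T1}) (B : {set T2}) :
  {in A &, injective f} -> f @: A \subset B -> #|B| <= #|A| -> f @: A = B.
Proof. by move=> injf fAB leBA; apply/eqP; rewrite eqEcard fAB (card_in_imset injf). Qed.

Section Hall.
Variables TA TB : finType.
Implicit Types (R : TA -> TB -> bool) (A W : {set TA}) (B : {set TB}).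

Definition neighbours R W := [set b | [exists a in W, R a b]].

Definition hall_condition R A := forall W, W \subset A -> #|W| <= #|neighbours R W|.

(* Option-valued, so that no default element of TB is needed. *)
Definition matching_of R A (phi : TA -> option TB) :=
  {in A &, injective phi} /\ forall a, a \in A -> exists2 b, phi a = Some b & R a b.

Lemma hall_condition_sub R A W : W \subset A -> hall_condition R A -> hall_condition R W.
Proof. by move=> WA hallA W' W'W; apply/hallA/(subset_trans W'W). Qed.

Lemma matching_of_sub R R' A phi :
  (forall a b, a \in A -> R a b -> R' a b) -> matching_of R A phi -> matching_of R' A phi.
Proof.
move=> RR' [injphi Rphi]; split=> // a aA.
by case: (Rphi a aA) => b phiab /(RR' _ _ aA); exists b.
Qed.

Lemma matching_of_glue R A W B phi1 phi2 :
  W \subset A ->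
  matching_of (fun a b => R a b && (b \in B)) W phi1 ->
  matching_of (fun a b => R a b && (b \notin B)) (A :\: W) phi2 ->
  matching_of R A (fun a => if a \in W then phi1 a else phi2 a).
Proof.
move=> WA [inj1 R1] [inj2 R2].
have outW a : a \in A -> a \in W = false -> a \in A :\: W by rewrite inE => -> ->.
split=> [a1 a2 a1A a2A /=|a aA /=]; last first.
  case: ifP => aW; first by case: (R1 a aW) => b -> /andP[]; exists b.
  by case: (R2 a (outW a aA aW)) => b -> /andP[]; exists b.
case: ifP => a1W; case: ifP => a2W; first exact: inj1; last exact: inj2 (outW _ _ _) (outW _ _ _).
- have [b1 -> /andP[_ b1B]] := R1 _ a1W; have [b2 -> /andP[_]] := R2 _ (outW _ a2A a2W).
  by move=> + [b12]; rewrite -b12 b1B.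
- have [b1 -> /andP[_]] := R2 _ (outW _ a1A a1W); have [b2 -> /andP[_ b2B]] := R1 _ a2W.
  by move=> + [b12]; rewrite b12 b2B.
Qed.

Section HallStep.
Variables (R : TA -> TB -> bool) (A : {set TA}).
Hypothesis hallA : hall_condition R A.
Hypothesis IH : forall R' A', #|A'| < #|A| -> hall_condition R' A' ->
  exists phi, matching_of R' A' phi.

Lemma hall_tight_step W : W \proper A -> W != set0 -> #|neighbours R W| <= #|W| ->
  exists phi, matching_of R A phi.
Proof.
move=> WpA Wn0 tightW; have WA := proper_sub WpA.
have [phi1 match1] := IH (proper_card WpA) (hall_condition_sub WA hallA).
pose R2 a b := R a b && (b \notin neighbours R W).
have hall2 : hall_condition R2 (A :\: W).
  move=> W' W'AW; have W'A := subset_trans W'AW (subsetDl A W).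
  have disjW : W' :&: W = set0.
    apply/setP=> a; rewrite !inE; apply/andP=> -[aW' aW].
    by move/subsetP: W'AW => /(_ a aW'); rewrite inE aW.
  have NRsub : neighbours R (W' :|: W) \subset neighbours R2 W' :|: neighbours R W.
    apply/subsetP=> b; rewrite !inE => /existsP[a /andP[]].
    rewrite inE => /orP[aW'|aW] Rab; last by apply/orP; right; apply/existsP; exists a; rewrite aW.
    case bN: [exists a0 in W, R a0 b]; first by rewrite orbT.
    by apply/orP; left; apply/existsP; exists a; rewrite aW' /R2 Rab inE bN.
  have W'WA : W' :|: W \subset A by rewrite subUset W'A WA.
  have := hallA W'WA; have := subset_leq_card NRsub.
  rewrite !cardsU disjW cards0; lia.
have ltAW : #|A :\: W| < #|A|.
  rewrite cardsDS //; have := subset_leq_card WA; have : 0 < #|W| by rewrite lt0n cards_eq0.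
  lia.
have [phi2 match2] := IH ltAW hall2.
exists (fun a => if a \in W then phi1 a else phi2 a).
apply: matching_of_glue WA _ match2; apply: matching_of_sub match1 => a b aW Rab.
by rewrite Rab inE; apply/existsP; exists a; rewrite aW.
Qed.

Lemma hall_loose_step :
    (forall W, W \proper A -> W != set0 -> #|W| < #|neighbours R W|) ->
  exists phi, matching_of R A phi.
Proof.
move=> loose; have [->|[a0 a0A]] := set_0Vmem A.
  by exists (fun=> None); split=> [a1 a2|a]; rewrite inE.
have [b0 Rab0] : exists b0, R a0 b0.
  have := @hallA [set a0]; rewrite sub1set a0A cards1 card_gt0 => /(_ isT) /set0Pn[b0].
  by rewrite inE => /existsP[a /andP[]]; rewrite inE => /eqP ->; exists b0.
pose R' a b := R a b && (b \notin [set b0]).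
have hall' : hall_condition R' (A :\ a0).
  move=> W WAa; have [->|[w wW]] := set_0Vmem W; first by rewrite cards0.
  have WpA : W \proper A.
    rewrite properE (subset_trans WAa (subsetDl _ _)); apply/subsetPn; exists a0 => //.
    by apply: contraTN isT => a0W; move/subsetP: WAa => /(_ a0 a0W); rewrite !inE eqxx.
  have NRsub : neighbours R W \subset b0 |: neighbours R' W.
    apply/subsetP=> b; rewrite !inE => /existsP[a /andP[aW Rab]].
    case: eqVneq => //= nb; apply/existsP; exists a.
    by rewrite aW /R' Rab inE nb.
  have Wn0 : W != set0 by apply/set0Pn; exists w.
  have := loose W WpA Wn0; have := subset_leq_card NRsub; rewrite cardsU1; lia.
have [phi' match'] : exists phi, matching_of R' (A :\ a0) phi.
  by apply: IH hall'; rewrite (cardsD1 a0 A) a0A.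
exists (fun a => if a \in [set a0] then Some b0 else phi' a).
apply: matching_of_glue _ _ match'; first by rewrite sub1set.
split=> [a1 a2 /set1P-> /set1P-> //|a /set1P->].
by exists b0; rewrite ?Rab0 ?set11.
Qed.
End HallStep.

Theorem hall R A : hall_condition R A -> exists phi, matching_of R A phi.
Proof.
have [n] := ubnP #|A|; elim: n R A => // n IH R A ltAn hallA.
have IHA R' A' : #|A'| < #|A| -> hall_condition R' A' -> exists phi, matching_of R' A' phi.
  by move=> ltA'A; apply: IH; apply: leq_trans ltA'A _.
have [/existsP[W /and3P[WpA Wn0 tightW]]|] :=
  boolP [exists W : {set TA}, [&& W \proper A, W != set0 & #|neighbours R W| <= #|W|]].
  exact: (hall_tight_step hallA IHA WpA Wn0 tightW).
rewrite negb_exists => /forallP loose; apply: (hall_loose_step hallA IHA) => W WpA Wn0.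
by have := loose W; rewrite WpA Wn0 /= -ltnNge.
Qed.

End Hall.

Lemma mem_connect_closed (T : finType) (r : rel T) (A : {set T}) x y :
  (forall a b, a \in A -> r a b -> b \in A) -> x \in A -> connect r x y -> y \in A.
Proof.
move=> closedA xA /connectP[p rp ->]; elim: p x xA rp => [//|z p IHp] x xA /= /andP[rxz rp].
exact: IHp (closedA _ _ xA rxz) rp.
Qed.

Lemma connect_in_closed (T : finType) (r r' : rel T) (A : {set T}) x y :
  (forall a b, a \in A -> r a b -> (b \in A) && r' a b) -> x \in A ->
  connect r x y -> connect r' x y.
Proof.
move=> closedA xA /connectP[p rp ->]; elim: p x xA rp => [|z p IHp] x xA /=.
  by rewrite connect0.
case/andP=> rxz rp; case/andP: (closedA _ _ xA rxz) => zA r'xz.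
exact: connect_trans (connect1 r'xz) (IHp _ zA rp).
Qed.

Section Components.
Variables (V : finType) (e : rel V).
Hypothesis esym : symmetric e.
Implicit Types (T K C Y : {set V}) (x y : V) (P Q : {set V} -> Prop).

Definition component_of T x := [set y | connect (induced e T) x y].

Lemma induced_sym T : symmetric (induced e T).
Proof. by move=> x y; rewrite /induced esym andbCA. Qed.

Lemma mem_component_of T x : x \in component_of T x.
Proof. by rewrite inE connect0. Qed.

Lemma component_of_induced T x a b :
  a \in component_of T x -> induced e T a b -> b \in component_of T x.
Proof. by rewrite !inE => xa ab; apply: connect_trans xa (connect1 ab). Qed.

Lemma component_of_sub T x : x \in T -> component_of T x \subset T.
Proof.
move=> xT; apply/subsetP => y; rewrite inE; apply: mem_connect_closed => //.
by move=> a b _ /and3P[].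
Qed.

Lemma component_of_eq T x y : y \in component_of T x -> component_of T y = component_of T x.
Proof.
rewrite inE => xy; apply/setP => z; rewrite !inE.
by rewrite (same_connect (sym_connect_sym (induced_sym T)) xy).
Qed.

Lemma component_of_component T x : x \in T -> is_component e T (component_of T x).
Proof. by exists x. Qed.

Lemma component_sub T C : is_component e T C -> C \subset T.
Proof. by case=> x xT ->; apply: component_of_sub. Qed.

Lemma componentE T C x : is_component e T C -> x \in C -> C = component_of T x.
Proof. by case=> y yT -> xC; rewrite (component_of_eq xC). Qed.

Lemma component_eq T C1 C2 x :
  is_component e T C1 -> is_component e T C2 -> x \in C1 -> x \in C2 -> C1 = C2.
Proof. by move=> C1T C2T xC1 xC2; rewrite (componentE C1T xC1) (componentE C2T xC2). Qed.

Lemma component_closed T C a b : is_component e T C -> a \in C -> b \in T -> e a b -> b \in C.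
Proof.
move=> CT aC bT eab; have aT := subsetP (component_sub CT) a aC.
have CE := componentE CT aC; rewrite CE in aC *.
by apply: component_of_induced aC _; apply/and3P.
Qed.

Lemma component_transfer T T' C : is_component e T C -> C \subset T' ->
  (forall a b, a \in C -> b \in T' -> e a b -> b \in C) -> is_component e T' C.
Proof.
move=> CT CT' closedC; case: (CT) => x xT Cx; rewrite -/(component_of T x) in Cx.
have xC : x \in C by rewrite Cx mem_component_of.
exists x; first exact: (subsetP CT').
apply/setP=> y; rewrite [y \in component_of _ _]inE; apply/idP/idP.
  rewrite Cx inE; apply: connect_in_closed (mem_component_of T x) => a b ax ab.
  have bx := component_of_induced ax ab; rewrite bx; rewrite -Cx in ax bx.
  by rewrite /= /induced (subsetP CT' a ax) (subsetP CT' b bx); case/and3P: ab.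
by apply: mem_connect_closed xC => a b aC /and3P[_ bT' eab]; apply: closedC aC bT' eab.
Qed.

Lemma component_subset T T' C : is_component e T C -> C \subset T' -> T' \subset T ->
  is_component e T' C.
Proof.
move=> CT CT' T'T; apply: (component_transfer CT CT') => a b aC bT'.
exact: component_closed CT aC (subsetP T'T b bT').
Qed.

Definition count_components P T := #|[set C | asbool (is_component e T C /\ P C)]|.

Lemma count_components_mono P Q T :
  (forall C, P C -> Q C) -> count_components P T <= count_components Q T.
Proof.
move=> PQ; apply/subset_leq_card/subsetP => C; rewrite !inE.
by move/asboolE => [CT /PQ QC]; apply/asboolE.
Qed.

Lemma leq_count_components P T (W : {set {set V}}) :
  (forall C, C \in W -> is_component e T C /\ P C) -> #|W| <= count_components P T.
Proof.
by move=> WP; apply/subset_leq_card/subsetP => C CW; rewrite inE; apply/asboolE/WP.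
Qed.

Lemma count_components_split P T K Y : is_component e T K -> ~ P K -> Y \subset K ->
  count_components P T + count_components P (K :\: Y) <= count_components P (T :\: Y).
Proof.
move=> KT notPK YK; rewrite /count_components.
set W1 := [set C | asbool (is_component e T C /\ P C)].
set W2 := [set C | asbool (is_component e (K :\: Y) C /\ P C)].
have W1P C : C \in W1 -> is_component e T C /\ P C by rewrite inE => /asboolE.
have W2P C : C \in W2 -> is_component e (K :\: Y) C /\ P C by rewrite inE => /asboolE.
have KS := component_sub KT.
have W1W2 : W1 :&: W2 = set0.
  apply/setP=> C; rewrite !inE; apply/negP => /andP[/asboolE[CT PC] /asboolE[[z zKY CE] _]].
  have zC : z \in C by rewrite CE mem_component_of.
  have zK : z \in K by move: zKY; rewrite inE => /andP[].
  by apply: notPK; rewrite -(component_eq CT KT zC zK).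
rewrite -cardsUI W1W2 cards0 addn0; apply: leq_count_components => C /setUP[/W1P|/W2P].
  move=> [CT PC]; split=> //; apply: (component_subset CT _ (subsetDl T Y)).
  apply/subsetP => z zC; rewrite inE (subsetP (component_sub CT) z zC) andbT.
  apply/negP => zY; apply: notPK; have zK := subsetP YK z zY.
  by rewrite -(component_eq CT KT zC zK).
move=> [CKY PC]; split=> //; have CKY' := component_sub CKY.
apply: (component_transfer CKY); first exact: subset_trans CKY' (setSD Y KS).
move=> a b aC; rewrite inE => /andP[bY bT] eab.
have aK : a \in K by move: (subsetP CKY' a aC); rewrite inE => /andP[].
by apply: (component_closed CKY aC _ eab); rewrite inE bY (component_closed KT aK bT eab).
Qed.

Lemma bF_le_count_components F T : bF F e T <= count_components (hypomatchable e) T.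
Proof. by apply: count_components_mono => C []. Qed.

End Components.

Definition has_P2 (F : sgraph -> Prop) := exists H, F H /\ fg_iso H P2.

Lemma has_P2_iso : has_P2 (fg_iso^~ P2).
Proof. by exists P2; split=> //; exists id; split=> //; exists id. Qed.

Section Factors.
Variables (V : finType) (e : rel V).
Hypotheses (esym : symmetric e) (eirr : irreflexive e).
Implicit Types (F : sgraph -> Prop) (S T C : {set V}) (f : rel V).

Definition is_Ffactor F S f :=
  [/\ symmetric f, forall x y, f x y -> [&& x \in S, y \in S & e x y] &
      forall x, x \in S -> exists H, F H /\ iso_on f [set y | connect f x y] H].

Lemma has_Ffactor_bigcup F (I : finType) (J : {set I}) (B : I -> {set V}) :
  (forall i j z, i \in J -> j \in J -> z \in B i -> z \in B j -> i = j) ->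
  (forall i, i \in J -> has_Ffactor F e (B i)) ->
  has_Ffactor F e (\bigcup_(i in J) B i).
Proof.
move=> disjB factorB.
have fam_ex i : exists f, i \in J -> is_Ffactor F (B i) f.
  by case iJ: (i \in J); [case: (factorB i iJ) => f; exists f | exists [rel _ _ | false]].
pose fam i := proj1_sig (constructive_indefinite_description _ (fam_ex i)).
have famP i : i \in J -> is_Ffactor F (B i) (fam i).
  exact: proj2_sig (constructive_indefinite_description _ (fam_ex i)).
have famB i a b : i \in J -> fam i a b -> [&& a \in B i, b \in B i & e a b].
  by move=> iJ; case: (famP i iJ) => _ + _; apply.
pose f x y := [exists i in J, fam i x y].
have fE i a b : i \in J -> a \in B i -> f a b = fam i a b.
  move=> iJ aBi; apply/existsP/idP => [[j /andP[jJ fjab]]|fiab]; last by exists i; rewrite iJ.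
  by case/and3P: (famB j a b jJ fjab) => aBj _ _; rewrite (disjB i j a iJ jJ aBi aBj).
exists f; split.
- move=> x y; apply/existsP/existsP => -[i /andP[iJ fi]]; exists i;
  by case: (famP i iJ) => fsym _ _; rewrite iJ fsym.
- move=> x y /existsP[i /andP[iJ /(famB i _ _ iJ)/and3P[xB yB ->]]].
  by rewrite andbT; apply/andP; split; apply/bigcupP; exists i.
- move=> x /bigcupP[i iJ xBi]; have [_ _ famC] := famP i iJ.
  have [H [FH [g [ginj gC gE]]]] := famC x xBi.
  have compE : [set y | connect f x y] = [set y | connect (fam i) x y].
    apply/setP=> y; rewrite !inE; apply/idP/idP.
      apply: (connect_in_closed (A := B i)) xBi => a b aBi fab.
      by rewrite (fE i a b iJ aBi) in fab; rewrite fab andbT; case/and3P: (famB i a b iJ fab).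
    by apply: connect_sub => a b fab; apply: connect1; apply/existsP; exists i; rewrite iJ.
  exists H; split=> //; exists g; split=> // [v|a b]; first by rewrite compE.
  have gaB : g a \in B i.
    have := proj2 (gC (g a)) (ex_intro _ a erefl); rewrite inE.
    by apply: mem_connect_closed xBi => a' b' _ /(famB i _ _ iJ)/and3P[].
  by rewrite (fE i _ _ iJ gaB) gE.
Qed.

Lemma has_Ffactor_pair F x y : has_P2 F -> e x y -> has_Ffactor F e [set x; y].
Proof.
move=> [H [FH [g0 [[h g0K hK] g0E]]]] exy.
have xy : x != y by apply: contraTneq exy => ->; rewrite eirr.
pose f a b := ((a == x) && (b == y)) || ((a == y) && (b == x)).
have fxy a b : f a b -> (a \in [set x; y]) && (b \in [set x; y]).
  by rewrite /f !inE; case/orP => /andP[/eqP-> /eqP->]; rewrite !eqxx ?orbT.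
exists f; split.
- by move=> a b; rewrite /f orbC; congr (_ || _); rewrite andbC.
- move=> a b fab; case/andP: (fxy a b fab) => -> ->.
  by case/orP: fab => /andP[/eqP-> /eqP->] //; rewrite esym.
- move=> z zxy; exists H; split => //.
  have -> : [set w | connect f z w] = [set x; y].
    apply/setP => w; rewrite [in LHS]inE; apply/idP/idP.
      by apply: mem_connect_closed zxy => a b _ /fxy /andP[].
    move=> wxy; have [->|wz] := eqVneq w z; first exact: connect0.
    apply: connect1; move: zxy wxy wz; rewrite /f !inE.
    by case/orP => /eqP->; case/orP => /eqP->; rewrite ?eqxx ?orbT.
  exists (fun a => if g0 a then x else y); split.
  + move=> a1 a2 /=; apply: contra_eq => ne12.
    have : g0 a1 != g0 a2 by apply: contra ne12 => /eqP/(can_inj g0K) ->.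
    by case: (g0 a1); case: (g0 a2) => //= _; rewrite // eq_sym.
  + move=> v; rewrite !inE; split.
      by case/orP=> /eqP->; [exists (h true) | exists (h false)]; rewrite hK.
    by case=> a <-; case: (g0 a); rewrite eqxx ?orbT.
  + move=> a b; rewrite -g0E /= /f.
    by case: (g0 a); case: (g0 b); rewrite !eqxx ?(negbTE xy) //= eq_sym (negbTE xy).
Qed.

Lemma perfect_matching_Ffactor F T :
  has_P2 F -> has_perfect_matching e T -> has_Ffactor F e T.
Proof.
move=> FP2 [M [Mpairs Munique]].
have MT A z : A \in M -> z \in A -> z \in T.
  by move=> AM; have [a [b [aT bT _ ->]]] := Mpairs A AM; case/set2P => ->.
have -> : T = \bigcup_(A in M) A.
  apply/setP=> z; apply/idP/bigcupP => [zT|[A AM /(MT A z AM)//]].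
  by have [A [[AM zA] _]] := Munique z zT; exists A.
apply: has_Ffactor_bigcup => [A1 A2 z A1M A2M zA1 zA2|A AM].
  by have [A [_ uniqA]] := Munique z (MT A1 z A1M zA1); rewrite -(uniqA A1) ?(uniqA A2).
by have [a [b [_ _ eab ->]]] := Mpairs A AM; apply: has_Ffactor_pair.
Qed.

Lemma perfect_matching_setU2 T x y : has_perfect_matching e T ->
  x \notin T -> y \notin T -> e x y -> has_perfect_matching e ([set x; y] :|: T).
Proof.
move=> [M [Mpairs Munique]] xT yT exy.
have notT z : z \in [set x; y] -> z \notin T by case/set2P => ->.
exists ([set x; y] |: M); split.
- move=> A /setU1P[->|AM]; first by exists x, y; rewrite !inE !eqxx ?orbT.
  by have [a [b [aT bT eab ->]]] := Mpairs A AM; exists a, b; rewrite !inE aT bT !orbT.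
- move=> z /setUP[zxy|zT].
    exists [set x; y]; split; first by rewrite setU11.
    move=> A [/setU1P[//|AM] zA]; have [a [b [aT bT _ AE]]] := Mpairs A AM.
    by move: zA (notT z zxy); rewrite AE => /set2P[->|->]; rewrite ?aT ?bT.
  have [A [[AM zA] uniqA]] := Munique z zT; exists A; split; first by rewrite setU1r.
  move=> A' [/setU1P[A'E|A'M] zA']; last exact: uniqA.
  by move: (notT z); rewrite -A'E zA' zT => /(_ isT).
Qed.

Lemma hypomatchable_setU1 C v x : hypomatchable e C -> v \in C -> x \notin C -> e x v ->
  has_perfect_matching e (x |: C).
Proof.
move=> hypC vC xC exv.
have -> : x |: C = [set x; v] :|: (C :\ v).
  apply/setP => z; rewrite !inE; have [->|zv] := eqVneq z v; first by rewrite vC !orbT.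
  by rewrite orbF.
apply: perfect_matching_setU2 (hypC v vC) _ _ exv; rewrite !inE ?eqxx //.
by rewrite (negbTE xC) andbF.
Qed.

Lemma P2factor_perfect_matching T :
  has_Ffactor (fg_iso^~ P2) e T -> has_perfect_matching e T.
Proof.
case=> f [fsym fT fC].
exists [set [set y | connect f x y] | x in T]; split.
- move=> A /imsetP[x xT ->].
  have [H [[g0 [[h g0K hK] g0E]] [g [ginj gC gE]]]] := fC x xT.
  have ftf : f (g (h true)) (g (h false)) by rewrite gE -g0E !hK.
  case/and3P: (fT _ _ ftf) => pT qT epq.
  exists (g (h true)), (g (h false)); split => //.
  apply/setP => w; apply/idP/idP.
    move/(gC w) => [a <-]; rewrite -[a]g0K !inE.
    by case: (g0 a); rewrite eqxx ?orbT.
  by case/set2P => ->; apply/(gC _); eexists.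
- move=> z zT; exists [set y | connect f z y]; split.
    by split; [apply/imsetP; exists z | rewrite inE connect0].
  move=> A [/imsetP[y yT ->]]; rewrite inE => yz.
  by apply/setP=> w; rewrite !inE (same_connect (sym_connect_sym fsym) yz).
Qed.

End Factors.

Lemma exists_max_deficiency (T : finType) (f : {set T} -> nat) (S : {set T}) :
  exists2 X : {set T}, X \subset S & forall Y : {set T}, Y \subset S ->
    f Y + #|X| <= f X + #|Y| /\ (f Y + #|X| = f X + #|Y| -> #|Y| <= #|X|).
Proof.
(* The score orders subsets lexicographically by f Y - #|Y|, then by #|Y|. *)
pose score Y := (f Y + #|S :\: Y|) * #|S|.+1 + #|Y|.
have [X XS Xmax] := @arg_maxnP _ set0 (fun Y => Y \subset S) score (sub0set S).
exists X => // Y YS; have := Xmax Y YS; rewrite /score !cardsDS //.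
have := subset_leq_card XS; have := subset_leq_card YS; split; nia.
Qed.

Section BarrierStep.
Variables (V : finType) (e : rel V).
Hypotheses (esym : symmetric e) (eirr : irreflexive e).
Variables (F : sgraph -> Prop) (S X : {set V}).
Local Notation hcount := (count_components e (hypomatchable e)).
Implicit Types (Y C : {set V}) (W : {set {set V}}).

Hypothesis FP2 : has_P2 F.
Hypothesis IH : forall F' (S' : {set V}), #|S'| < #|S| -> has_P2 F' ->
  (forall Y : {set V}, Y \subset S' -> bF F' e (S' :\: Y) <= #|Y|) -> has_Ffactor F' e S'.
Hypothesis barrierS : forall Y : {set V}, Y \subset S -> bF F e (S :\: Y) <= #|Y|.
Hypothesis XS : X \subset S.
Hypothesis Xmax : forall Y : {set V}, Y \subset S ->
  hcount (S :\: Y) + #|X| <= hcount (S :\: X) + #|Y| /\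
  (hcount (S :\: Y) + #|X| = hcount (S :\: X) + #|Y| -> #|Y| <= #|X|).

Lemma nonhypomatchable_component_proper K :
  is_component e (S :\: X) K -> ~ hypomatchable e K -> K \proper S.
Proof.
(* K = S forces X = set0; the tie-break on #|X| then yields the barrier condition for
   S - u in the family {P2}, so S would be hypomatchable. *)
move=> KSX notHK; have KS := subset_trans (component_sub KSX) (subsetDl S X).
rewrite properEneq KS andbT; apply/eqP => KeqS; rewrite KeqS in KSX notHK.
have X0 : X = set0.
  apply/setP => x; rewrite inE; apply/negP => xX.
  by have := subsetP (component_sub KSX) x (subsetP XS x xX); rewrite inE xX.
rewrite X0 setD0 in KSX.
have h0 : hcount S = 0.
  apply/eqP; rewrite cards_eq0; apply/eqP/setP => C; rewrite !inE.
  apply/negP => /asboolE[CS hypC]; apply: notHK; case: (CS) => x xS CE.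
  have xC : x \in C by rewrite CE mem_component_of.
  by rewrite -(component_eq esym CS KSX xC xS).
apply: notHK => u uS; apply: P2factor_perfect_matching.
apply: IH has_P2_iso _ => [|Y YSu]; first by rewrite (cardsD1 u S) uS.
apply: leq_trans (bF_le_count_components _ _ _) _; rewrite setDDl.
have uY : u \notin Y by apply/negP => /(subsetP YSu); rewrite !inE eqxx.
have uYS : u |: Y \subset S.
  by rewrite subUset sub1set uS (subset_trans YSu (subsetDl _ _)).
have [] := Xmax uYS; rewrite X0 setD0 cards0 h0 cardsU1 uY; lia.
Qed.

Lemma nonhypomatchable_component_factor K :
  is_component e (S :\: X) K -> ~ hypomatchable e K -> has_Ffactor F e K.
Proof.
move=> KSX notHK; have KpS := nonhypomatchable_component_proper KSX notHK.
apply: IH (proper_card KpS) FP2 _ => Y YK.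
apply: leq_trans (bF_le_count_components _ _ _) _.
have XYS : X :|: Y \subset S by rewrite subUset XS (subset_trans YK (proper_sub KpS)).
have := count_components_split esym KSX notHK YK; rewrite setDDl.
have [] := Xmax XYS; have := cardsU X Y; lia.
Qed.

Let hyps := [set C | asbool (is_component e (S :\: X) C /\ hypomatchable e C)].
Let k := #|hyps| - #|X|.
(* A hypomatchable component may be matched to a neighbour in X, or to one of the k dummy
   vertices provided it already has an F-factor. *)
Let attach C (b : V + 'I_k) :=
  if b is inl x then (x \in X) && [exists v in C, e x v] else asbool (has_Ffactor F e C).

Lemma hypsP C : C \in hyps -> is_component e (S :\: X) C /\ hypomatchable e C.
Proof. by rewrite inE => /asboolE. Qed.

Lemma hcount_hyps : hcount (S :\: X) = #|hyps|.
Proof. by []. Qed.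

Lemma card_le_hyps : #|X| <= #|hyps|.
Proof. by have [] := Xmax (sub0set S); rewrite setD0 cards0 hcount_hyps; lia. Qed.

Lemma hall_condition_attach : hall_condition attach hyps.
Proof.
move=> W Whyps; have hypsW C : C \in W -> C \in hyps := subsetP Whyps C.
pose NX := [set x in X | [exists C in W, [exists v in C, e x v]]].
have NXX : NX \subset X by apply/subsetP => x; rewrite inE => /andP[].
have W_comp C : C \in W -> is_component e (S :\: NX) C.
  move=> CW; have [CSX _] := hypsP (hypsW C CW).
  apply: (component_transfer CSX).
    exact: subset_trans (component_sub CSX) (setDS S NXX).
  move=> a b aC; rewrite inE => /andP[bNX bS] eab.
  apply: (component_closed esym CSX aC _ eab); rewrite inE bS andbT.
  apply: contraNN bNX => bX; rewrite inE bX; apply/existsP; exists C; rewrite CW.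
  by apply/existsP; exists a; rewrite aC esym.
have inl_sub : inl @: NX \subset neighbours attach W.
  apply/subsetP => b /imsetP[x]; rewrite inE => /andP[xX /existsP[C /andP[CW ex]]] ->.
  by rewrite inE; apply/existsP; exists C; rewrite CW /= xX.
have := subset_leq_card inl_sub; rewrite card_imset; last exact: inl_inj.
have [/existsP[C0 /andP[C0W C0fact]]|nofact] :=
  boolP [exists C in W, asbool (has_Ffactor F e C)].
- pose D : {set V + 'I_k} := inr @: [set: 'I_k].
  have inr_sub : D \subset neighbours attach W.
    apply/subsetP => _ /imsetP[i _ ->]; rewrite inE; apply/existsP; exists C0.
    by rewrite C0W.
  have card_inr : #|D| = k.
    by rewrite card_imset ?cardsT ?card_ord //; apply: inr_inj.
  have disj_inl_inr : inl @: NX :&: D = set0.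
    by apply/setP => b; rewrite !inE; apply/negP => /andP[/imsetP[x _ ->] /imsetP[]].
  have sub_union : inl @: NX :|: D \subset neighbours attach W by rewrite subUset inl_sub inr_sub.
  have := subset_leq_card sub_union.
  rewrite cardsU disj_inl_inr cards0 card_inr card_imset; last exact: inl_inj.
  have le_W : #|W| <= hcount (S :\: NX).
    apply: leq_count_components => C CW; split; first exact: W_comp.
    by have [] := hypsP (hypsW C CW).
  have [] := Xmax (subset_trans NXX XS); rewrite hcount_hyps.
  have := card_le_hyps; have kE : k = #|hyps| - #|X| by []; lia.
- have le_W : #|W| <= bF F e (S :\: NX).
    apply: (@leq_count_components _ _ (fun C => hypomatchable e C /\ ~ has_Ffactor F e C)).
    move=> C CW; split; first exact: W_comp.
    split; first by have [] := hypsP (hypsW C CW).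
    move=> factC; move/existsPn: nofact => /(_ C); rewrite CW /=.
    by move/negP; apply; apply/asboolE.
  have := barrierS (subset_trans NXX XS); lia.
Qed.

Section Assembly.
Variable phi : {set V} -> option (V + 'I_k).
Hypothesis phi_match : matching_of attach hyps phi.

Lemma matching_covers x : x \in X -> exists2 C, C \in hyps & phi C = Some (inl x).
Proof.
move=> xX; have [phi_inj phi_attach] := phi_match.
pose targets : {set option (V + 'I_k)} := Some @: (inl @: X :|: inr @: [set: 'I_k]).
have onto : phi @: hyps = targets.
  apply: imset_card_onto phi_inj _ _.
    apply/subsetP => _ /imsetP[C Chyps ->]; have [[y|i] -> attachC] := phi_attach C Chyps.
      by apply/imset_f; rewrite inE; apply/orP; left; apply/imset_f; case/andP: attachC.
    by apply/imset_f; rewrite inE; apply/orP; right; apply/imset_f.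
  rewrite card_imset; last exact: Some_inj.
  rewrite cardsU !card_imset ?cardsT ?card_ord; try by [apply: inl_inj | apply: inr_inj].
  have := card_le_hyps; have kE : k = #|hyps| - #|X| by []; lia.
have : Some (inl x) \in targets by apply/imset_f; rewrite inE imset_f.
by rewrite -onto => /imsetP[C Chyps phiC]; exists C.
Qed.

Let block C := if C \in hyps then (if phi C is Some (inl x) then x |: C else C) else C.

Lemma mem_block C z : z \in block C -> z \in C \/ C \in hyps /\ phi C = Some (inl z).
Proof.
rewrite /block; case: ifP => Chyps; last by left.
case: (phi C) => [[x|i]|]; try by left.
by case/setU1P => [->|]; [right|left].
Qed.

Lemma sub_block C : C \subset block C.
Proof. by rewrite /block; case: ifP => // _; case: (phi C) => [[x|i]|] //; apply: subsetUr. Qed.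

Lemma block_matched C x : C \in hyps -> phi C = Some (inl x) -> x \in block C.
Proof. by rewrite /block => -> ->; rewrite setU11. Qed.

Lemma block_factor C : is_component e (S :\: X) C -> has_Ffactor F e (block C).
Proof.
move=> CSX; have [_ phi_attach] := phi_match; rewrite /block; case: ifPn => Chyps; last first.
  apply: (nonhypomatchable_component_factor CSX) => hypC.
  by case/negP: Chyps; rewrite inE; apply/asboolE; split.
have [b phiC attachC] := phi_attach C Chyps; rewrite phiC.
case: b phiC attachC => [x|i] _ /=; last by move/asboolE.
case/andP=> xX /existsP[v /andP[vC exv]]; have [_ hypC] := hypsP Chyps.
apply: (perfect_matching_Ffactor esym eirr FP2); apply: (hypomatchable_setU1 hypC vC _ exv).
by apply/negP => xC; have := subsetP (component_sub CSX) x xC; rewrite inE xX.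
Qed.

Lemma Ffactor_of_matching : has_Ffactor F e S.
Proof.
have [phi_inj phi_attach] := phi_match.
pose comps := [set C | asbool (is_component e (S :\: X) C)].
have compsP C : C \in comps -> is_component e (S :\: X) C by rewrite inE => /asboolE.
have notX C z : C \in comps -> z \in C -> z \notin X.
  by move=> /compsP CSX zC; have := subsetP (component_sub CSX) z zC; rewrite inE => /andP[].
have matchedX C z : C \in hyps -> phi C = Some (inl z) -> z \in X.
  by move=> Chyps phiC; have [b] := phi_attach C Chyps; rewrite phiC => -[<-] /andP[].
have -> : S = \bigcup_(C in comps) block C.
  apply/setP => z; apply/idP/bigcupP => [zS|[C Ccomps /mem_block[zC|[Chyps phiC]]]].
  - have [zX|zX] := boolP (z \in X).
      have [C Chyps phiC] := matching_covers zX; exists C; last exact: block_matched.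
      by rewrite inE; apply/asboolE; have [] := hypsP Chyps.
    exists (component_of e (S :\: X) z).
      by rewrite inE; apply/asboolE; apply: component_of_component; rewrite inE zX zS.
    exact: subsetP (sub_block _) z (mem_component_of _ _ _).
  - exact: subsetP (subset_trans (component_sub (compsP C Ccomps)) (subsetDl S X)) z zC.
  - exact: subsetP XS z (matchedX C z Chyps phiC).
apply: has_Ffactor_bigcup => [C1 C2 z C1comps C2comps|C /compsP]; last exact: block_factor.
case/mem_block => [zC1|[C1hyps phiC1]]; case/mem_block => [zC2|[C2hyps phiC2]].
- exact: (component_eq esym (compsP C1 C1comps) (compsP C2 C2comps) zC1 zC2).
- by move: (notX C1 z C1comps zC1); rewrite (matchedX C2 z C2hyps phiC2).
- by move: (notX C2 z C2comps zC2); rewrite (matchedX C1 z C1hyps phiC1).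
- by apply: phi_inj => //; rewrite phiC1 phiC2.
Qed.

End Assembly.

Lemma barrier_step : has_Ffactor F e S.
Proof.
by have [phi phi_match] := hall hall_condition_attach; apply: Ffactor_of_matching phi_match.
Qed.

End BarrierStep.

Theorem has_Ffactor_of_barrier (V : finType) (e : rel V) (F : sgraph -> Prop) (S : {set V}) :
  symmetric e -> irreflexive e -> has_P2 F ->
  (forall X : {set V}, X \subset S -> bF F e (S :\: X) <= #|X|) -> has_Ffactor F e S.
Proof.
move=> esym eirr; have [n] := ubnP #|S|; elim: n F S => // n IH F S ltSn FP2 barrierS.
have [X XS Xmax] :=
  exists_max_deficiency (fun Y => count_components e (hypomatchable e) (S :\: Y)) S.
apply: (barrier_step esym eirr FP2 _ barrierS XS Xmax) => F' S' ltS'S.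
by apply: IH; apply: leq_trans ltS'S _.
Qed.

Unset Implicit Arguments.
Set Strict Implicit.

Theorem proposition2p1 (F : sgraph -> Prop)
  (HFconn : forall H, F H -> connected_sgraph H)
  (HP2 : exists H, F H /\ fg_iso H P2)
  (V : finType) (e : rel V) (esym : symmetric e) (eirr : irreflexive e) :
  (forall X : {set V}, bF F e (~: X) <= #|X|) ->
  has_Ffactor F e [set: V].
Proof.
move=> barrier; apply: has_Ffactor_of_barrier esym eirr HP2 _ => X _.
by rewrite setTD; apply: barrier.
Qed.
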